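(* Let $s\colon M\to TM\setminus 0$ be a smooth section such that the pullback metric $s^*g$, with components $(s^*g)_{\alpha\beta}(x)=g_{\alpha\beta}(x,s(x))$, is non-degenerate (this holds since $g$ is non-degenerate). Let $\nabla^{s^*g}$ be the Levi-Civita connection of $s^*g$ on $M$, with coefficients $(\nabla^{s^*g})^\alpha_{\beta\gamma}$, and let $\overset{s}{\nabla}{}^{\mathrm{ChR}}$ be the linear connection on $M$ with coefficients $\Gamma^\alpha_{\beta\gamma}(x,s(x))$ (the pullback of the Chern–Rund connection). Then in every chart \[ (\nabla^{s^*g})^\alpha_{\beta\gamma}-\Gamma^\alpha_{\beta\gamma}(x,s(x))=C^\alpha_{\mu\gamma}\,D_\beta s^\mu+C^\alpha_{\mu\beta}\,D_\gamma s^\mu-C_{\mu\beta\gamma}\,g^{\alpha\delta}D_\delta s^\mu, \] where all of $C$, $g$, $g^{-1}$ are evaluated at $(x,s(x))$. Equivalently, for all vector fields $X,Y$ on $M$, \[ \nabla^{s^*g}_XY-\overset{s}{\nabla}{}^{\mathrm{ChR}}_XY=C(D_Ys,X)+C(D_Xs,Y)-g\big(C(X,Y),Ds\big)^\sharp, \] where $C(U,V)$ denotes the vector with components $C^\alpha_{\mu\nu}U^\mu V^\nu$, $g(C(X,Y),Ds)^\sharp$ the vector with components $g^{\alpha\delta}C_{\mu\beta\gamma}X^\beta Y^\gamma D_\delta s^\mu$, and $C$, $g$ stand for their pullbacks by $s$.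
   Context: $M$ is a smooth $n$-manifold, $E=TM\setminus 0$, and $\{x^\mu,y^\mu\}$ are the coordinates on $TM$ induced by coordinates $\{x^\mu\}$ on $M$. A pseudo-Finsler Lagrangian is a smooth $\mathscr{L}\colon E\to\mathbb{R}$ with $\mathscr{L}(x,ty)=t^2\mathscr{L}(x,y)$ for all $t>0$, whose Finsler metric $g_{\mu\nu}=\partial^2\mathscr{L}/\partial y^\mu\partial y^\nu$ is non-degenerate (any signature); $g^{\mu\nu}$ is its inverse and indices are raised/lowered with $g$. Cartan torsion: $C_{\alpha\beta\gamma}=\tfrac12\partial g_{\beta\gamma}/\partial y^\alpha$. Spray: $2G^\alpha=g^{\alpha\delta}\big(\frac{\partial^2\mathscr{L}}{\partial x^\gamma\partial y^\delta}y^\gamma-\frac{\partial\mathscr{L}}{\partial x^\delta}\big)$; nonlinear connection $N^\alpha_\mu=\partial G^\alpha/\partial y^\mu$; $\frac{\delta}{\delta x^\mu}=\frac{\partial}{\partial x^\mu}-N^\nu_\mu\frac{\partial}{\partial y^\nu}$. Chern–Rund (= Cartan horizontal) coefficients: $\Gamma^\alpha_{\beta\gamma}=\tfrac12 g^{\alpha\sigma}\big(\frac{\delta g_{\sigma\gamma}}{\delta x^\beta}+\frac{\delta g_{\sigma\beta}}{\delta x^\gamma}-\frac{\delta g_{\beta\gamma}}{\delta x^\sigma}\big)$. For a section $s\colon M\to E$, $D_\alpha s^\mu=\frac{\partial s^\mu}{\partial x^\alpha}+N^\mu_\alpha(x,s(x))$ and $D_\xi s^\mu=\xi^\alpha D_\alpha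 s^\mu$. *)

From Stdlib Require Import Reals Lra List ClassicalEpsilon.
From Stdlib Require Fin.
Open Scope R_scope.

Definition V (m : nat) := Fin.t m -> R.

Definition vadd {m} (p q : V m) : V m := fun i => p i + q i.
Definition vsub {m} (p q : V m) : V m := fun i => p i - q i.
Definition vzero {m} : V m := fun _ => 0.
Definition kdelta {m} (i j : Fin.t m) : R := if Fin.eq_dec i j then 1 else 0.
Definition ebasis {m} (i : Fin.t m) : V m := fun j => kdelta i j.
Definition vscale {m} (t : R) (p : V m) : V m := fun i => t * p i.

Fixpoint fsum (m : nat) : (Fin.t m -> R) -> R :=
  match m with
  | O => fun _ => 0
  | S k => fun f => f Fin.F1 + fsum k (fun i => f (Fin.FS i))
  end.
Arguments fsum {m} f.

Definition vnorm {m} (p : V m) : R := fsum (fun i => Rabs (p i)).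
Definition is_open {m} (D : V m -> Prop) : Prop :=
  forall p, D p -> exists r, 0 < r /\ forall q, vnorm (vsub q p) < r -> D q.
Definition continuous_at_pt {m} (f : V m -> R) (p : V m) : Prop :=
  forall eps, 0 < eps -> exists del, 0 < del /\
    forall q, vnorm (vsub q p) < del -> Rabs (f q - f p) < eps.

Definition is_partial {m} (i : Fin.t m) (f : V m -> R) (p : V m) (l : R) : Prop :=
  derivable_pt_lim (fun t => f (vadd p (vscale t (ebasis i)))) 0 l.

(** The partial derivative as a total operator (its value when it exists). *)
Definition pd {m} (i : Fin.t m) (f : V m -> R) (p : V m) : R :=
  epsilon (inhabits 0) (fun l => is_partial i f p l).

Definition iter_pd {m} (l : list (Fin.t m)) (f : V m -> R) : V m -> R :=
  fold_right (fun i h => pd i h) f l.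

Definition smooth_on {m} (D : V m -> Prop) (f : V m -> R) : Prop :=
  forall (l : list (Fin.t m)) p, D p ->
    (forall i, is_partial i (iter_pd l f) p (iter_pd (i :: l) f p)) /\
    continuous_at_pt (iter_pd l f) p.

Definition Mat n := Fin.t n -> Fin.t n -> R.
Definition is_inverse {n} (A B : Mat n) : Prop :=
  (forall a b, fsum (fun s => A a s * B s b) = kdelta a b) /\
  (forall a b, fsum (fun s => B a s * A s b) = kdelta a b).
Definition nondegenerate {n} (A : Mat n) : Prop := exists B, is_inverse A B.
Definition minv {n} (A : Mat n) : Mat n :=
  epsilon (inhabits (fun _ _ => 0)) (fun B => is_inverse A B).

(** Coordinates on TM over a chart: z = (x, y) in R^(n+n). *)
Definition xpart {n} (z : V (n + n)) : V n := fun i => z (Fin.L n i).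
Definition ypart {n} (z : V (n + n)) : V n := fun i => z (Fin.R n i).

Section Finsler.
Variable n : nat.
Variable L : V n -> V n -> R.

Definition pdx (i : Fin.t n) (f : V n -> V n -> R) (x y : V n) : R :=
  pd i (fun x' => f x' y) x.
Definition pdy (i : Fin.t n) (f : V n -> V n -> R) (x y : V n) : R :=
  pd i (fun y' => f x y') y.

Definition gmet (x y : V n) : Mat n :=
  fun mu nu => pdy mu (fun x' y' => pdy nu (fun x'' y'' => L x'' y'') x' y') x y.
Definition ginv (x y : V n) : Mat n := minv (gmet x y).

Definition cartan (a b c : Fin.t n) (x y : V n) : R :=
  / 2 * pdy a (fun x' y' => gmet x' y' b c) x y.
Definition cartan_up (a b c : Fin.t n) (x y : V n) : R :=
  fsum (fun d => ginv x y a d * cartan d b c x y).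

Definition spray (a : Fin.t n) (x y : V n) : R :=
  / 2 * fsum (fun d => ginv x y a d *
     (fsum (fun c => pdx c (fun x' y' => pdy d (fun x'' y'' => L x'' y'') x' y') x y * y c)
      - pdx d (fun x' y' => L x' y') x y)).

Definition nlc (a mu : Fin.t n) (x y : V n) : R := pdy mu (spray a) x y.

Definition deltax (mu : Fin.t n) (f : V n -> V n -> R) (x y : V n) : R :=
  pdx mu f x y - fsum (fun nu => nlc nu mu x y * pdy nu f x y).

Definition chern_rund (a b c : Fin.t n) (x y : V n) : R :=
  / 2 * fsum (fun s => ginv x y a s *
    (deltax b (fun x' y' => gmet x' y' s c) x y
     + deltax c (fun x' y' => gmet x' y' s b) x y
     - deltax s (fun x' y' => gmet x' y' b c) x y)).

Definition Dsec (s : V n -> V n) (a mu : Fin.t n) (x : V n) : R :=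
  pd a (fun x' => s x' mu) x + nlc mu a x (s x).

End Finsler.

Definition levi_civita {n} (h : V n -> Mat n) (a b c : Fin.t n) (x : V n) : R :=
  / 2 * fsum (fun s => minv (h x) a s *
    (pd b (fun x' => h x' s c) x + pd c (fun x' => h x' s b) x
     - pd s (fun x' => h x' b c) x)).

Definition pullback_metric {n} (L : V n -> V n -> R) (s : V n -> V n) (x : V n) : Mat n :=
  gmet n L x (s x).

From Stdlib Require Import Reals Lra FunctionalExtensionality ClassicalEpsilon Classical List.
From Stdlib Require Fin.
From Coquelicot Require Import Coquelicot.
Import ListNotations.
Open Scope R_scope.

(** Write the Lagrangian as a function [F] of [z = (x, y)].  Then
    [g_{σκ}], [2 C_{μσκ}] and [δ_β g_{σκ}] are the second derivatives
    [∂_{y^σ} ∂_{y^κ} F], the third derivatives [∂_{y^μ} ∂_{y^σ} ∂_{y^κ} F] and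
    [∂_{x^β} g_{σκ} - N^μ_β 2 C_{μσκ}].  By the chain rule,
    [∂_β (s^*g)_{σκ} = ∂_{x^β} g_{σκ} + 2 C_{μσκ} ∂_β s^μ], hence
    [∂_β (s^*g)_{σκ} - δ_β g_{σκ} = 2 C_{μσκ} D_β s^μ].  Both connections are
    given by the Koszul formula, the first with [∂_β] and the second with
    [δ_β]; subtracting them and using the total symmetry of [C] (symmetry of
    third derivatives) gives the formula. *)

Lemma kdelta_refl {m} (i : Fin.t m) : kdelta i i = 1.
Proof. unfold kdelta; destruct (Fin.eq_dec i i); congruence. Qed.

Lemma kdelta_neq {m} (i j : Fin.t m) : i <> j -> kdelta i j = 0.
Proof. unfold kdelta; destruct (Fin.eq_dec i j); congruence. Qed.

Lemma kdelta_inj {m k} (f : Fin.t m -> Fin.t k) (i j : Fin.t m) :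
  (forall i j, f i = f j -> i = j) -> kdelta (f i) (f j) = kdelta i j.
Proof.
  intros Hf; unfold kdelta.
  destruct (Fin.eq_dec (f i) (f j)) as [E|], (Fin.eq_dec i j); subst; try congruence.
  now apply Hf in E.
Qed.

Lemma fsum_ext {m} (f g : Fin.t m -> R) : (forall i, f i = g i) -> fsum f = fsum g.
Proof.
  revert f g; induction m; intros f g H; simpl; auto.
  rewrite H, (IHm _ (fun i => g (Fin.FS i))); auto.
Qed.

Lemma fsum_plus {m} (f g : Fin.t m -> R) : fsum (fun i => f i + g i) = fsum f + fsum g.
Proof. revert f g; induction m; intros f g; simpl; [lra|rewrite IHm; lra]. Qed.

Lemma fsum_minus {m} (f g : Fin.t m -> R) : fsum (fun i => f i - g i) = fsum f - fsum g.
Proof. revert f g; induction m; intros f g; simpl; [lra|rewrite IHm; lra]. Qed.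

Lemma fsum_mult_l {m} (c : R) (f : Fin.t m -> R) : fsum (fun i => c * f i) = c * fsum f.
Proof. revert f; induction m; intros f; simpl; [lra|rewrite IHm; lra]. Qed.

Lemma fsum_mult_r {m} (c : R) (f : Fin.t m -> R) : fsum (fun i => f i * c) = fsum f * c.
Proof. rewrite Rmult_comm, <- fsum_mult_l. apply fsum_ext; intros; ring. Qed.

Lemma fsum_0 {m} : fsum (fun _ : Fin.t m => 0) = 0.
Proof. induction m; simpl; [|rewrite IHm]; lra. Qed.

Lemma fsum_swap {m k} (f : Fin.t m -> Fin.t k -> R) :
  fsum (fun i => fsum (fun j => f i j)) = fsum (fun j => fsum (fun i => f i j)).
Proof.
  revert f; induction m; intros f; simpl; [now rewrite fsum_0|].
  now rewrite IHm, <- fsum_plus.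
Qed.

Lemma fsum_le {m} (f g : Fin.t m -> R) : (forall i, f i <= g i) -> fsum f <= fsum g.
Proof.
  revert f g; induction m; intros f g H; simpl; [lra|].
  pose proof (IHm (fun i => f (Fin.FS i)) (fun i => g (Fin.FS i)) (fun i => H _)).
  specialize (H Fin.F1); lra.
Qed.

Lemma fsum_nonneg {m} (f : Fin.t m -> R) : (forall i, 0 <= f i) -> 0 <= fsum f.
Proof. intros H. rewrite <- (@fsum_0 m). now apply fsum_le. Qed.

Lemma fsum_term_le {m} (f : Fin.t m -> R) i : (forall i, 0 <= f i) -> f i <= fsum f.
Proof.
  revert f i; induction m; intros f i H; [inversion i|].
  apply (Fin.caseS' i); simpl.
  - pose proof (fsum_nonneg (fun i => f (Fin.FS i)) (fun i => H _)); lra.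
  - intros p. pose proof (IHm (fun i => f (Fin.FS i)) p (fun i => H _)).
    specialize (H Fin.F1); lra.
Qed.

Lemma fsum_kdelta {m} (b : Fin.t m) (f : Fin.t m -> R) : fsum (fun i => kdelta b i * f i) = f b.
Proof.
  revert b f; induction m; intros b f; [inversion b|].
  apply (Fin.caseS' b); simpl.
  - rewrite kdelta_refl, (fsum_ext _ (fun _ => 0)), fsum_0; [lra|].
    intros i; rewrite kdelta_neq by discriminate; lra.
  - intros p. rewrite kdelta_neq by discriminate.
    rewrite (fsum_ext _ (fun i => kdelta p i * f (Fin.FS i))), IHm; [lra|].
    intros i. rewrite (kdelta_inj Fin.FS); [reflexivity|apply Fin.FS_inj].
Qed.

Lemma fsum_add {m k} (f : Fin.t (m + k) -> R) :
  fsum f = fsum (fun i => f (Fin.L k i)) + fsum (fun j => f (Fin.R m j)).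
Proof.
  revert f; induction m; intros f; simpl; [now rewrite Rplus_0_l|].
  rewrite (IHm (fun i => f (Fin.FS i))); simpl; now rewrite Rplus_assoc.
Qed.

Lemma V_ext {m} (p q : V m) : (forall i, p i = q i) -> p = q.
Proof. intros; now apply functional_extensionality. Qed.

Lemma vnorm_nonneg {m} (p : V m) : 0 <= vnorm p.
Proof. apply fsum_nonneg; intros; apply Rabs_pos. Qed.

Lemma vnorm_triang {m} (p q : V m) : vnorm (vadd p q) <= vnorm p + vnorm q.
Proof. unfold vnorm, vadd. rewrite <- fsum_plus. apply fsum_le; intros; apply Rabs_triang. Qed.

Lemma Rabs_coord_le_vnorm {m} (p : V m) i : Rabs (p i) <= vnorm p.
Proof. apply (fsum_term_le (fun i => Rabs (p i))); intros; apply Rabs_pos. Qed.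

Lemma vnorm_scale_ebasis {m} (t : R) (i : Fin.t m) : vnorm (vscale t (ebasis i)) = Rabs t.
Proof.
  unfold vnorm, vscale, ebasis.
  rewrite (fsum_ext _ (fun k => kdelta i k * Rabs t)); [apply (fsum_kdelta i (fun _ => _))|].
  intros k; unfold kdelta; destruct (Fin.eq_dec i k).
  - now rewrite Rmult_1_r, Rmult_1_l.
  - now rewrite Rmult_0_r, Rmult_0_l, Rabs_R0.
Qed.

Lemma vadd_scale_0 {m} (p q : V m) : vadd p (vscale 0 q) = p.
Proof. apply V_ext; intros; unfold vadd, vscale; ring. Qed.

Definition vtail {m} (p : V (S m)) : V m := fun j => p (Fin.FS j).
Definition vcons {m} (a : R) (w : V m) : V (S m) :=
  fun i => Fin.caseS' i (fun _ => R) a (fun j => w j).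

Lemma vcons_eta {m} (p : V (S m)) : p = vcons (p Fin.F1) (vtail p).
Proof. apply V_ext; intros i; now apply (Fin.caseS' i). Qed.

Lemma vnorm_sub_vcons {m} a (w : V m) (p : V (S m)) :
  vnorm (vsub (vcons a w) p) = Rabs (a - p Fin.F1) + vnorm (vsub w (vtail p)).
Proof. reflexivity. Qed.

Lemma vcons_shift_F1 {m} a (w : V m) t :
  vadd (vcons a w) (vscale t (ebasis Fin.F1)) = vcons (a + t) w.
Proof.
  apply V_ext; intros i; apply (Fin.caseS' i); unfold vadd, vscale, ebasis; simpl.
  - rewrite kdelta_refl; lra.
  - intros j; rewrite kdelta_neq by discriminate; lra.
Qed.

Lemma vcons_shift_FS {m} a (w : V m) j t :
  vadd (vcons a w) (vscale t (ebasis (Fin.FS j))) = vcons a (vadd w (vscale t (ebasis j))).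
Proof.
  apply V_ext; intros i; apply (Fin.caseS' i); unfold vadd, vscale, ebasis; simpl.
  - rewrite kdelta_neq by discriminate; lra.
  - intros k; rewrite (kdelta_inj Fin.FS); [reflexivity|apply Fin.FS_inj].
Qed.

Lemma pd_unique {m} i (f : V m -> R) p l : is_partial i f p l -> pd i f p = l.
Proof.
  intros H; unfold pd.
  eapply uniqueness_limite; [|exact H].
  exact (epsilon_spec (inhabits 0) (fun l => is_partial i f p l) (ex_intro _ l H)).
Qed.

Section LineRestriction.
Variables (m k : nat) (i : Fin.t m) (j : Fin.t k) (f : V m -> R) (g : V k -> R) (p : V m) (q : V k).
Hypothesis same_line :
  forall t, f (vadd p (vscale t (ebasis i))) = g (vadd q (vscale t (ebasis j))).

Lemma is_partial_same_line l : is_partial i f p l -> is_partial j g q l.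
Proof. unfold is_partial; now rewrite (functional_extensionality _ _ same_line). Qed.

Lemma pd_same_line : pd i f p = pd j g q.
Proof. unfold pd, is_partial; now rewrite (functional_extensionality _ _ same_line). Qed.

End LineRestriction.

Lemma derivable_pt_lim_shift (f : R -> R) c l :
  derivable_pt_lim (fun t => f (c + t)) 0 l -> derivable_pt_lim f c l.
Proof.
  intros H eps He. destruct (H eps He) as [d Hd]. exists d. intros h H1 H2.
  specialize (Hd h H1 H2). now rewrite Rplus_0_l, Rplus_0_r in Hd.
Qed.

Lemma derivable_pt_lim_affine a k : derivable_pt_lim (fun t => a + t * k) 0 k.
Proof.
  intros eps He. exists (mkposreal 1 Rlt_0_1). intros h H1 H2.
  replace ((a + (0 + h) * k - (a + 0 * k)) / h - k) with 0 by (field; auto).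
  now rewrite Rabs_R0.
Qed.

(** * The chain rule along a curve *)

Lemma derivable_pt_lim_cont (f : R -> R) x l : derivable_pt_lim f x l ->
  forall eps, 0 < eps -> exists del, 0 < del /\
    forall y, Rabs (y - x) < del -> Rabs (f y - f x) < eps.
Proof.
  intros H eps He.
  assert (Hc : continuity_pt f x) by (apply derivable_continuous_pt; exists l; exact H).
  destruct (Hc eps He) as [alp [Ha Hb]]. exists alp; split; auto.
  intros y Hy. destruct (Req_dec y x) as [->|Hne].
  - now rewrite Rminus_diag, Rabs_R0.
  - apply (Hb y); split; [split; [exact I|auto]|exact Hy].
Qed.

Lemma curve_continuous_at_0 {m} (g : R -> V m) (dg : V m) :
  (forall k, derivable_pt_lim (fun t => g t k) 0 (dg k)) ->
  forall eta, 0 < eta -> exists del, 0 < del /\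
    forall t, Rabs t < del -> vnorm (vsub (g t) (g 0)) < eta.
Proof.
  revert g dg; induction m; intros g dg Hd eta He.
  - exists 1; split; [lra|]. intros; unfold vnorm; simpl; lra.
  - destruct (derivable_pt_lim_cont _ _ _ (Hd Fin.F1) (eta / 2)) as [d1 [Hd1 H1]]; [lra|].
    destruct (IHm (fun t => vtail (g t)) (vtail dg) (fun k => Hd (Fin.FS k)) (eta / 2))
      as [d2 [Hd2 H2]]; [lra|].
    exists (Rmin d1 d2); split; [now apply Rmin_pos|].
    intros t Ht.
    assert (Ht1 : Rabs (t - 0) < d1)
      by (rewrite Rminus_0_r; eapply Rlt_le_trans; [exact Ht|apply Rmin_l]).
    assert (Ht2 : Rabs t < d2) by (eapply Rlt_le_trans; [exact Ht|apply Rmin_r]).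
    specialize (H1 t Ht1); specialize (H2 t Ht2).
    change (Rabs (g t Fin.F1 - g 0 Fin.F1) + vnorm (vsub (vtail (g t)) (vtail (g 0))) < eta).
    lra.
Qed.

Lemma is_partial_F1_vcons {m} (G : V (S m) -> R) (w : V m) c l :
  is_partial Fin.F1 G (vcons c w) l -> derivable_pt_lim (fun u => G (vcons u w)) c l.
Proof.
  unfold is_partial; intros H. apply derivable_pt_lim_shift.
  replace (fun t => G (vcons (c + t) w))
    with (fun t => G (vadd (vcons c w) (vscale t (ebasis Fin.F1)))); [exact H|].
  apply functional_extensionality; intros t. now rewrite vcons_shift_F1.
Qed.

Lemma MVT_first_coord {m} (G : V (S m) -> R) (w : V m) a u :
  (forall c, Rabs (c - a) <= Rabs (u - a) ->
     is_partial Fin.F1 G (vcons c w) (pd Fin.F1 G (vcons c w))) ->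
  exists xi, Rabs (xi - a) <= Rabs (u - a) /\
    G (vcons u w) - G (vcons a w) = pd Fin.F1 G (vcons xi w) * (u - a).
Proof.
  intros H. destruct (Rtotal_order u a) as [Hlt|[->|Hgt]].
  - destruct (MVT_cor2 (fun u => G (vcons u w)) (fun c => pd Fin.F1 G (vcons c w)) u a Hlt)
      as [c [Hc1 Hc2]].
    + intros c Hc. apply is_partial_F1_vcons, H. rewrite !Rabs_left1 by lra. lra.
    + exists c. split; [rewrite !Rabs_left1 by lra; lra|]. simpl in Hc1; lra.
  - exists a. split; [lra|ring].
  - destruct (MVT_cor2 (fun u => G (vcons u w)) (fun c => pd Fin.F1 G (vcons c w)) a u Hgt)
      as [c [Hc1 Hc2]].
    + intros c Hc. apply is_partial_F1_vcons, H. rewrite !Rabs_right by lra. lra.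
    + exists c. split; [rewrite !Rabs_right by lra; lra|]. simpl in Hc1; lra.
Qed.

Lemma Rabs_perturbed_product_lt P D Q e eps :
  0 < eps -> Rabs e < eps / (2 * (Rabs D + 1)) ->
  Rabs (Q - D) < Rmin 1 (eps / (2 * (Rabs P + 1))) ->
  Rabs ((P + e) * Q - P * D) < eps.
Proof.
  intros He H1 H2.
  pose proof (Rabs_pos P); pose proof (Rabs_pos D); pose proof (Rabs_pos e).
  pose proof (Rabs_pos (Q - D)).
  pose proof (Rmin_l 1 (eps / (2 * (Rabs P + 1)))).
  pose proof (Rmin_r 1 (eps / (2 * (Rabs P + 1)))).
  assert (HQ : Rabs Q < Rabs D + 1).
  { pose proof (Rabs_triang (Q - D) D) as T. replace (Q - D + D) with Q in T by ring. lra. }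
  replace ((P + e) * Q - P * D) with (P * (Q - D) + e * Q) by ring.
  eapply Rle_lt_trans; [apply Rabs_triang|]. rewrite !Rabs_mult.
  assert (A1 : Rabs P * Rabs (Q - D) <= eps / 2).
  { apply Rle_trans with (Rabs P * (eps / (2 * (Rabs P + 1)))).
    - apply Rmult_le_compat_l; lra.
    - apply Rmult_le_reg_r with (2 * (Rabs P + 1)); [lra|].
      unfold Rdiv; field_simplify; [nra|lra]. }
  assert (A2 : Rabs e * Rabs Q < eps / 2).
  { apply Rle_lt_trans with (Rabs e * (Rabs D + 1)); [apply Rmult_le_compat_l; lra|].
    apply Rmult_lt_reg_r with (2 / (Rabs D + 1)).
    - apply Rdiv_lt_0_compat; lra.
    - replace (Rabs e * (Rabs D + 1) * (2 / (Rabs D + 1))) with (2 * Rabs e) by (field; lra).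
      replace (eps / 2 * (2 / (Rabs D + 1))) with (2 * (eps / (2 * (Rabs D + 1))))
        by (field; lra).
      lra. }
  lra.
Qed.

(** By the mean value theorem the difference quotient is [∂_1 G] at an
    intermediate point, which tends to [g 0]. *)
Lemma derivable_first_coord_increment {m} (G : V (S m) -> R) (g : R -> V (S m)) (dg : V (S m)) r :
  0 < r ->
  (forall z, vnorm (vsub z (g 0)) < r -> is_partial Fin.F1 G z (pd Fin.F1 G z)) ->
  continuous_at_pt (pd Fin.F1 G) (g 0) ->
  (forall k, derivable_pt_lim (fun t => g t k) 0 (dg k)) ->
  derivable_pt_lim
    (fun t => G (vcons (g t Fin.F1) (vtail (g t))) - G (vcons (g 0 Fin.F1) (vtail (g t))))
    0 (pd Fin.F1 G (g 0) * dg Fin.F1).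
Proof.
  intros Hr Hp Hc Hd eps Heps.
  set (P := pd Fin.F1 G (g 0)); set (D := dg Fin.F1).
  pose proof (Rabs_pos P); pose proof (Rabs_pos D).
  destruct (Hc (eps / (2 * (Rabs D + 1)))) as [d1 [Hd1 H1]].
  { apply Rdiv_lt_0_compat; lra. }
  destruct (curve_continuous_at_0 g dg Hd (Rmin r d1)) as [d2 [Hd2 H2]].
  { now apply Rmin_pos. }
  destruct (Hd Fin.F1 (Rmin 1 (eps / (2 * (Rabs P + 1))))) as [d3 H3].
  { apply Rmin_pos; [lra|apply Rdiv_lt_0_compat; lra]. }
  assert (Hdd : 0 < Rmin d2 d3) by (apply Rmin_pos; auto; apply cond_pos).
  exists (mkposreal _ Hdd). intros h Hh0 Hh; simpl in Hh.
  rewrite Rplus_0_l, Rminus_diag, Rminus_0_r.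
  specialize (H2 h (Rlt_le_trans _ _ _ Hh (Rmin_l _ _))).
  specialize (H3 h Hh0 (Rlt_le_trans _ _ _ Hh (Rmin_r _ _))); rewrite Rplus_0_l in H3.
  change (Rabs (g h Fin.F1 - g 0 Fin.F1) + vnorm (vsub (vtail (g h)) (vtail (g 0))) < Rmin r d1)
    in H2.
  pose proof (Rmin_l r d1); pose proof (Rmin_r r d1).
  destruct (MVT_first_coord G (vtail (g h)) (g 0 Fin.F1) (g h Fin.F1)) as [xi [Hxi ->]].
  { intros c Hc'. apply Hp. rewrite vnorm_sub_vcons. lra. }
  assert (Hx : Rabs (pd Fin.F1 G (vcons xi (vtail (g h))) - P) < eps / (2 * (Rabs D + 1))).
  { apply H1. rewrite vnorm_sub_vcons. lra. }
  replace (pd Fin.F1 G (vcons xi (vtail (g h))) * (g h Fin.F1 - g 0 Fin.F1) / h)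
    with ((P + (pd Fin.F1 G (vcons xi (vtail (g h))) - P)) * ((g h Fin.F1 - g 0 Fin.F1) / h))
    by (field; auto).
  now apply Rabs_perturbed_product_lt.
Qed.

(** Induction on the dimension: split [G (g t)] into the increment in the
    first coordinate and a function of the remaining ones. *)
Lemma derivable_pt_lim_comp_curve {m} (G : V m -> R) (g : R -> V m) (dg : V m) r :
  0 < r ->
  (forall z, vnorm (vsub z (g 0)) < r -> forall k, is_partial k G z (pd k G z)) ->
  (forall k, continuous_at_pt (pd k G) (g 0)) ->
  (forall k, derivable_pt_lim (fun t => g t k) 0 (dg k)) ->
  derivable_pt_lim (fun t => G (g t)) 0 (fsum (fun k => pd k G (g 0) * dg k)).
Proof.
  revert G g dg; induction m; intros G g dg Hr Hp Hc Hd.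
  - simpl. assert (E : (fun t => G (g t)) = fct_cte (G (g 0))).
    { apply functional_extensionality; intros t. unfold fct_cte. f_equal.
      apply V_ext; intros i; inversion i. }
    rewrite E. apply derivable_pt_lim_const.
  - set (G' := fun w : V m => G (vcons (g 0 Fin.F1) w)).
    assert (Hline : forall j w t, G (vadd (vcons (g 0 Fin.F1) w) (vscale t (ebasis (Fin.FS j))))
                                  = G' (vadd w (vscale t (ebasis j))))
      by (intros; unfold G'; now rewrite vcons_shift_FS).
    assert (Hpd' : forall j w, pd j G' w = pd (Fin.FS j) G (vcons (g 0 Fin.F1) w))
      by (intros; symmetry; apply pd_same_line, Hline).
    assert (IH : derivable_pt_lim (fun t => G' (vtail (g t))) 0
                   (fsum (fun j => pd j G' (vtail (g 0)) * vtail dg j))).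
    { apply IHm; auto.
      - intros z Hz j. rewrite Hpd'.
        apply (is_partial_same_line _ _ (Fin.FS j) j G G' (vcons (g 0 Fin.F1) z) z (Hline j z)).
        apply Hp. rewrite vnorm_sub_vcons, Rminus_diag, Rabs_R0. lra.
      - intros j eps He. destruct (Hc (Fin.FS j) eps He) as [d [Hd0 Hd1]].
        exists d; split; auto. intros q Hq. rewrite !Hpd', <- vcons_eta. apply Hd1.
        rewrite vnorm_sub_vcons, Rminus_diag, Rabs_R0. lra.
      - intros j. apply (Hd (Fin.FS j)). }
    pose proof (derivable_pt_lim_plus _ _ _ _ _
      (derivable_first_coord_increment G g dg r Hr (fun z Hz => Hp z Hz Fin.F1) (Hc Fin.F1) Hd)
      IH) as Hsum.
    replace (fun t => G (g t))
      with (plus_fct (fun t => G (vcons (g t Fin.F1) (vtail (g t)))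
                               - G (vcons (g 0 Fin.F1) (vtail (g t))))
                     (fun t => G' (vtail (g t)))).
    + replace (fsum (fun k => pd k G (g 0) * dg k))
        with (pd Fin.F1 G (g 0) * dg Fin.F1 + fsum (fun j => pd j G' (vtail (g 0)) * vtail dg j));
        [exact Hsum|].
      simpl. f_equal. apply fsum_ext; intros j. now rewrite Hpd', <- vcons_eta.
    + apply functional_extensionality; intros t. unfold plus_fct, G'.
      rewrite <- vcons_eta. ring.
Qed.

(** * Symmetry of second partial derivatives *)

Definition plane {m} (z0 : V m) i j (u v : R) : V m :=
  vadd (vadd z0 (vscale u (ebasis i))) (vscale v (ebasis j)).

Lemma plane_0_0 {m} (z0 : V m) i j : plane z0 i j 0 0 = z0.
Proof. apply V_ext; intros k; unfold plane, vadd, vscale; ring. Qed.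

Lemma plane_comm {m} (z0 : V m) i j u v : plane z0 i j u v = plane z0 j i v u.
Proof. apply V_ext; intros k; unfold plane, vadd, vscale; ring. Qed.

Lemma vnorm_plane_le {m} (z0 : V m) i j u v : vnorm (vsub (plane z0 i j u v) z0) <= Rabs u + Rabs v.
Proof.
  replace (vsub (plane z0 i j u v) z0) with (vadd (vscale u (ebasis i)) (vscale v (ebasis j))).
  - rewrite <- (vnorm_scale_ebasis u i), <- (vnorm_scale_ebasis v j). apply vnorm_triang.
  - apply V_ext; intros k; unfold plane, vadd, vsub; ring.
Qed.

Lemma is_derive_plane_1 {m} (f : V m -> R) z0 i j u v l :
  is_partial i f (plane z0 i j u v) l -> is_derive (fun a : R => f (plane z0 i j a v)) u l.
Proof.
  intros H. apply is_derive_Reals, derivable_pt_lim_shift.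
  replace (fun t => f (plane z0 i j (u + t) v))
    with (fun t => f (vadd (plane z0 i j u v) (vscale t (ebasis i)))); [exact H|].
  apply functional_extensionality; intros t. f_equal.
  apply V_ext; intros k; unfold plane, vadd, vscale; ring.
Qed.

Section MixedPartials.
Variables (m : nat) (H : V m -> R) (z0 : V m) (r : R).
Hypothesis Hr : 0 < r.
Hypothesis H_C2 : forall z, vnorm (vsub z z0) < r -> forall k,
  is_partial k H z (pd k H z) /\ forall k', is_partial k' (pd k H) z (pd k' (pd k H) z).

Lemma plane_near i j u v : Rabs u < r / 2 -> Rabs v < r / 2 ->
  vnorm (vsub (plane z0 i j u v) z0) < r.
Proof. pose proof (vnorm_plane_le z0 i j u v). lra. Qed.

Lemma is_derive_plane_2 i j u v : Rabs u < r / 2 -> Rabs v < r / 2 ->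
  is_derive (fun b : R => H (plane z0 i j u b)) v (pd j H (plane z0 i j u v)).
Proof.
  intros Hu Hv.
  assert (E : (fun b : R => H (plane z0 i j u b)) = (fun b : R => H (plane z0 j i b u)))
    by (apply functional_extensionality; intros; now rewrite plane_comm).
  rewrite E. apply is_derive_plane_1. rewrite <- plane_comm. apply H_C2, plane_near; auto.
Qed.

Lemma is_derive_mixed_plane i j u v : Rabs u < r / 4 -> Rabs v < r / 4 ->
  is_derive (fun a : R => Derive (fun b => H (plane z0 i j a b)) v) u
            (pd i (pd j H) (plane z0 i j u v)).
Proof.
  intros Hu Hv. apply is_derive_ext_loc with (f := fun a => pd j H (plane z0 i j a v)).
  - assert (Hr4 : 0 < r / 4) by lra.
    exists (mkposreal _ Hr4). intros a Ha. change R in a. change (Rabs (a - u) < r / 4) in Ha.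
    symmetry. apply is_derive_unique, is_derive_plane_2; [|lra].
    pose proof (Rabs_triang (a - u) u) as T. replace (a - u + u) with a in T by ring. lra.
  - apply is_derive_plane_1, H_C2, plane_near; lra.
Qed.

Lemma continuity_mixed_plane i j : continuous_at_pt (pd i (pd j H)) z0 ->
  continuity_2d_pt (fun u v => Derive (fun a => Derive (fun b => H (plane z0 i j a b)) v) u) 0 0.
Proof.
  intros Hc eps. destruct (Hc eps (cond_pos eps)) as [d [Hd Hd']].
  assert (Hm : 0 < Rmin (r / 4) (d / 2)) by (apply Rmin_pos; lra).
  exists (mkposreal _ Hm). intros u v Hu Hv; simpl in Hu, Hv. rewrite Rminus_0_r in Hu, Hv.
  pose proof (Rmin_l (r / 4) (d / 2)); pose proof (Rmin_r (r / 4) (d / 2)).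
  assert (H00 : Rabs 0 < r / 4) by (rewrite Rabs_R0; lra).
  rewrite (is_derive_unique _ _ _ (is_derive_mixed_plane i j u v ltac:(lra) ltac:(lra))),
    (is_derive_unique _ _ _ (is_derive_mixed_plane i j 0 0 H00 H00)), plane_0_0.
  apply Hd'. pose proof (vnorm_plane_le z0 i j u v). lra.
Qed.

Lemma pd_comm i j : continuous_at_pt (pd i (pd j H)) z0 -> continuous_at_pt (pd j (pd i H)) z0 ->
  pd i (pd j H) z0 = pd j (pd i H) z0.
Proof.
  intros Hc1 Hc2.
  assert (H0 : Rabs 0 < r / 4) by (rewrite Rabs_R0; lra).
  assert (Hmixed : forall i j, pd i (pd j H) z0
                               = Derive (fun a => Derive (fun b => H (plane z0 i j a b)) 0) 0)
    by (intros i' j'; rewrite <- (plane_0_0 z0 i' j') at 1; symmetry;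
        now apply is_derive_unique, is_derive_mixed_plane).
  assert (Hswap : forall u, (fun a => Derive (fun b => H (plane z0 j i a b)) u)
                            = (fun a => Derive (fun b => H (plane z0 i j b a)) u))
    by (intros; apply functional_extensionality; intros a; f_equal;
        apply functional_extensionality; intros b; now rewrite plane_comm).
  rewrite (Hmixed i j), (Hmixed j i), (Hswap 0).
  apply (Schwarz (fun a b => H (plane z0 i j a b)) 0 0).
  - assert (Hr4 : 0 < r / 4) by lra.
    exists (mkposreal _ Hr4). intros u v Hu Hv; simpl in Hu, Hv. rewrite Rminus_0_r in Hu, Hv.
    split; [|split; [|split]].
    + eexists. apply is_derive_plane_1, H_C2, plane_near; lra.
    + eexists. apply is_derive_plane_2; lra.
    + eexists. now apply is_derive_mixed_plane.
    + eexists. rewrite <- Hswap. now apply is_derive_mixed_plane.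
  - now apply continuity_mixed_plane.
  - intros eps. destruct (continuity_mixed_plane j i Hc2 eps) as [d Hd].
    exists d. intros u v Hu Hv. rewrite <- !Hswap. exact (Hd v u Hv Hu).
Qed.

End MixedPartials.

Lemma iter_pd_app {m} (l l' : list (Fin.t m)) (f : V m -> R) :
  iter_pd l' (iter_pd l f) = iter_pd (l' ++ l) f.
Proof. unfold iter_pd; now rewrite fold_right_app. Qed.

Lemma smooth_on_iter_pd {m} D (f : V m -> R) l : smooth_on D f -> smooth_on D (iter_pd l f).
Proof.
  intros Hf l' p Hp. rewrite !iter_pd_app. split.
  - intros i. rewrite iter_pd_app. exact (proj1 (Hf (l' ++ l) p Hp) i).
  - exact (proj2 (Hf (l' ++ l) p Hp)).
Qed.

Lemma smooth_on_pd {m} D (f : V m -> R) i : smooth_on D f -> smooth_on D (pd i f).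
Proof. exact (smooth_on_iter_pd D f [i]). Qed.

Lemma smooth_pd_comm {m} D (f : V m -> R) z i j :
  is_open D -> smooth_on D f -> D z -> pd i (pd j f) z = pd j (pd i f) z.
Proof.
  intros HD Hf Hz. destruct (HD z Hz) as [r [Hr Hball]].
  apply pd_comm with r; auto.
  - intros z' Hz' k. split.
    + exact (proj1 (Hf [] z' (Hball z' Hz')) k).
    + intros k'. exact (proj1 (Hf [k] z' (Hball z' Hz')) k').
  - exact (proj2 (Hf [i; j] z Hz)).
  - exact (proj2 (Hf [j; i] z Hz)).
Qed.

Lemma smooth_comp_curve {m} D (G : V m -> R) (g : R -> V m) (dg : V m) :
  is_open D -> smooth_on D G -> D (g 0) ->
  (forall k, derivable_pt_lim (fun t => g t k) 0 (dg k)) ->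
  derivable_pt_lim (fun t => G (g t)) 0 (fsum (fun k => pd k G (g 0) * dg k)).
Proof.
  intros HD HG Hg0 Hdg. destruct (HD (g 0) Hg0) as [r [Hr Hball]].
  apply derivable_pt_lim_comp_curve with r; auto.
  - intros z Hz k. exact (proj1 (HG [] z (Hball z Hz)) k).
  - intros k. exact (proj2 (HG [k] (g 0) Hg0)).
Qed.

Definition join {n} (x y : V n) : V (n + n) :=
  fun k => Fin.case_L_R' (fun _ => R) k (fun q => x q) (fun q => y q).

Lemma join_L {n} (x y : V n) i : join x y (Fin.L n i) = x i.
Proof. apply (Fin.case_L_R'_L (fun _ => R)). Qed.

Lemma join_R {n} (x y : V n) i : join x y (Fin.R n i) = y i.
Proof. apply (Fin.case_L_R'_R (fun _ => R)). Qed.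

Lemma join_ext {n} (z w : V (n + n)) :
  (forall i, z (Fin.L n i) = w (Fin.L n i)) -> (forall i, z (Fin.R n i) = w (Fin.R n i)) -> z = w.
Proof. intros HL HR. apply V_ext; intros k. now apply (Fin.case_L_R' (fun k => z k = w k) k). Qed.

Lemma xpart_join {n} (x y : V n) : xpart (join x y) = x.
Proof. apply V_ext; intros; apply join_L. Qed.

Lemma ypart_join {n} (x y : V n) : ypart (join x y) = y.
Proof. apply V_ext; intros; apply join_R. Qed.

Lemma kdelta_L_R {n} (i j : Fin.t n) : kdelta (Fin.L n i) (Fin.R n j) = 0.
Proof. apply kdelta_neq, Fin.L_R_neq. Qed.

Lemma kdelta_R_L {n} (i j : Fin.t n) : kdelta (Fin.R n i) (Fin.L n j) = 0.
Proof. apply kdelta_neq. intros E. symmetry in E. now apply Fin.L_R_neq in E. Qed.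

Lemma join_shift_x {n} (x y : V n) mu t :
  vadd (join x y) (vscale t (ebasis (Fin.L n mu))) = join (vadd x (vscale t (ebasis mu))) y.
Proof.
  apply join_ext; intros i; unfold vadd, vscale, ebasis; rewrite ?join_L, ?join_R.
  - rewrite (kdelta_inj (Fin.L n)); [reflexivity|apply Fin.L_inj].
  - rewrite kdelta_L_R; lra.
Qed.

Lemma join_shift_y {n} (x y : V n) mu t :
  vadd (join x y) (vscale t (ebasis (Fin.R n mu))) = join x (vadd y (vscale t (ebasis mu))).
Proof.
  apply join_ext; intros i; unfold vadd, vscale, ebasis; rewrite ?join_L, ?join_R.
  - rewrite kdelta_R_L; lra.
  - rewrite (kdelta_inj (Fin.R n)); [reflexivity|apply Fin.R_inj].
Qed.

Lemma pdx_join {n} (Phi : V (n + n) -> R) i x y :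
  pdx n i (fun x' y' => Phi (join x' y')) x y = pd (Fin.L n i) Phi (join x y).
Proof. apply pd_same_line. intros t. now rewrite join_shift_x. Qed.

Lemma pdy_join {n} (Phi : V (n + n) -> R) i x y :
  pdy n i (fun x' y' => Phi (join x' y')) x y = pd (Fin.R n i) Phi (join x y).
Proof. apply pd_same_line. intros t. now rewrite join_shift_y. Qed.

Lemma vnorm_sub_split {n} (z w : V (n + n)) :
  vnorm (vsub z w) = vnorm (vsub (xpart z) (xpart w)) + vnorm (vsub (ypart z) (ypart w)).
Proof. unfold vnorm at 1. now rewrite fsum_add. Qed.

Lemma V_neq_exists_coord {n} (p : V n) : p <> vzero -> exists k, p k <> 0.
Proof.
  intros Hp. apply NNPP. intros Hn. apply Hp, V_ext. intros k.
  apply NNPP. intros Hk. apply Hn. now exists k.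
Qed.

Definition TM0_chart {n} (U : V n -> Prop) (z : V (n + n)) : Prop :=
  U (xpart z) /\ ypart z <> vzero.

Definition tm_fun {n} (f : V n -> V n -> R) (z : V (n + n)) : R := f (xpart z) (ypart z).

Lemma tm_fun_join {n} (f : V n -> V n -> R) x y : f x y = tm_fun f (join x y).
Proof. unfold tm_fun. now rewrite xpart_join, ypart_join. Qed.

Lemma TM0_chart_open {n} (U : V n -> Prop) : is_open U -> is_open (TM0_chart U).
Proof.
  intros HU z [Ux Hy].
  destruct (HU _ Ux) as [r [Hr Hball]].
  destruct (V_neq_exists_coord _ Hy) as [k Hk].
  exists (Rmin r (Rabs (ypart z k))). split; [apply Rmin_pos; auto; now apply Rabs_pos_lt|].
  intros w Hw. rewrite vnorm_sub_split in Hw.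
  pose proof (Rmin_l r (Rabs (ypart z k))); pose proof (Rmin_r r (Rabs (ypart z k))).
  pose proof (vnorm_nonneg (vsub (xpart w) (xpart z))).
  pose proof (vnorm_nonneg (vsub (ypart w) (ypart z))).
  split; [apply Hball; lra|].
  intros Hw0. pose proof (Rabs_coord_le_vnorm (vsub (ypart w) (ypart z)) k) as Hc.
  change (Rabs (ypart w k - ypart z k) <= vnorm (vsub (ypart w) (ypart z))) in Hc.
  replace (ypart w k) with 0 in Hc by (now rewrite Hw0).
  rewrite Rminus_0_l, Rabs_Ropp in Hc. lra.
Qed.

Lemma pd_comp_section {n} D (Phi : V (n + n) -> R) (s : V n -> V n) x b :
  is_open D -> smooth_on D Phi -> D (join x (s x)) ->
  (forall mu, is_partial b (fun x' => s x' mu) x (pd b (fun x' => s x' mu) x)) ->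
  pd b (fun x' => Phi (join x' (s x'))) x
  = pd (Fin.L n b) Phi (join x (s x))
    + fsum (fun mu => pd (Fin.R n mu) Phi (join x (s x)) * pd b (fun x' => s x' mu) x).
Proof.
  intros HD HPhi Hx Hs.
  set (g := fun t => join (vadd x (vscale t (ebasis b))) (s (vadd x (vscale t (ebasis b))))).
  set (dg := join (ebasis b) (fun mu => pd b (fun x' => s x' mu) x)).
  assert (Hg0 : g 0 = join x (s x)) by (unfold g; now rewrite vadd_scale_0).
  apply pd_unique. rewrite <- Hg0.
  replace (pd (Fin.L n b) Phi (g 0) + _) with (fsum (fun k => pd k Phi (g 0) * dg k)).
  - apply smooth_comp_curve with D; auto.
    + change (D (g 0)). now rewrite Hg0.
    + intros k. apply (Fin.case_L_R' (fun k => derivable_pt_lim (fun t => g t k) 0 (dg k)) k);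
        intros i; unfold g, dg; rewrite ?join_L, ?join_R.
      * replace (fun t => join _ _ (Fin.L n i)) with (fun t => x i + t * ebasis b i)
          by (apply functional_extensionality; intros t; now rewrite join_L).
        apply derivable_pt_lim_affine.
      * replace (fun t => join _ _ (Fin.R n i)) with (fun t => s (vadd x (vscale t (ebasis b))) i)
          by (apply functional_extensionality; intros t; now rewrite join_R).
        apply Hs.
  - rewrite fsum_add. f_equal.
    + unfold dg. rewrite <- (fsum_kdelta b (fun i => pd (Fin.L n i) Phi (g 0))).
      apply fsum_ext; intros i. rewrite join_L. unfold ebasis. ring.
    + apply fsum_ext; intros i. unfold dg. now rewrite join_R.
Qed.

Section FinslerCoordinates.
Variables (n : nat) (L : V n -> V n -> R) (F : V (n + n) -> R).
Hypothesis L_join : forall x y, L x y = F (join x y).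

Lemma gmet_join b c :
  (fun x y => gmet n L x y b c) = (fun x y => pd (Fin.R n b) (pd (Fin.R n c) F) (join x y)).
Proof.
  assert (HL : L = fun x y => F (join x y))
    by (do 2 (apply functional_extensionality; intro); apply L_join).
  do 2 (apply functional_extensionality; intro). unfold gmet. rewrite HL.
  replace (fun x' y' => pdy n c (fun x'' y'' => F (join x'' y'')) x' y')
    with (fun x' y' => pd (Fin.R n c) F (join x' y'))
    by (do 2 (apply functional_extensionality; intro); now rewrite pdy_join).
  apply pdy_join.
Qed.

Lemma cartan_join a b c x y :
  cartan n L a b c x y = / 2 * pd (Fin.R n a) (pd (Fin.R n b) (pd (Fin.R n c) F)) (join x y).
Proof. unfold cartan. now rewrite gmet_join, pdy_join. Qed.

Lemma deltax_gmet_join b sg c x y :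
  deltax n L b (fun x' y' => gmet n L x' y' sg c) x y
  = pd (Fin.L n b) (pd (Fin.R n sg) (pd (Fin.R n c) F)) (join x y)
    - 2 * fsum (fun nu => nlc n L nu b x y * cartan n L nu sg c x y).
Proof.
  unfold deltax. rewrite gmet_join, pdx_join, <- fsum_mult_l. f_equal.
  apply fsum_ext; intros nu. rewrite pdy_join, cartan_join. field.
Qed.

End FinslerCoordinates.

Section PullbackMetric.
Variables (n : nat) (U : V n -> Prop) (L : V n -> V n -> R) (s : V n -> V n).
Hypothesis HU : is_open U.
Hypothesis HL : smooth_on (TM0_chart U) (tm_fun L).

Lemma TM0_chart_join x y : U x -> y <> vzero -> TM0_chart U (join x y).
Proof. intros. unfold TM0_chart. now rewrite xpart_join, ypart_join. Qed.

Lemma cartan_sym x y mu sg c : U x -> y <> vzero ->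
  cartan n L mu sg c x y = cartan n L sg mu c x y.
Proof.
  intros Ux Hy. rewrite !(cartan_join n L (tm_fun L) (tm_fun_join L)).
  f_equal. apply smooth_pd_comm with (TM0_chart U).
  - now apply TM0_chart_open.
  - now apply smooth_on_pd.
  - now apply TM0_chart_join.
Qed.

Hypothesis Hs : forall mu, smooth_on U (fun x => s x mu).
Hypothesis Hs0 : forall x, U x -> s x <> vzero.

Lemma pd_pullback_metric_sub_deltax x b sg c : U x ->
  pd b (fun x' => pullback_metric L s x' sg c) x
  - deltax n L b (fun x' y' => gmet n L x' y' sg c) x (s x)
  = 2 * fsum (fun mu => cartan n L mu sg c x (s x) * Dsec n L s b mu x).
Proof.
  intros Ux. set (F := tm_fun L). set (Phi := pd (Fin.R n sg) (pd (Fin.R n c) F)).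
  pose proof (tm_fun_join L) as HLF.
  assert (E : (fun x' => pullback_metric L s x' sg c) = (fun x' => Phi (join x' (s x'))))
    by (apply functional_extensionality; intros x';
        exact (equal_f (equal_f (gmet_join n L F HLF sg c) x') (s x'))).
  rewrite E, (pd_comp_section (TM0_chart U)), (deltax_gmet_join n L F HLF).
  - assert (E1 : fsum (fun mu => pd (Fin.R n mu) Phi (join x (s x)) * pd b (fun x' => s x' mu) x)
                 = 2 * fsum (fun mu => cartan n L mu sg c x (s x) * pd b (fun x' => s x' mu) x)).
    { rewrite <- fsum_mult_l. apply fsum_ext; intros mu.
      rewrite (cartan_join n L F HLF). unfold Phi. field. }
    assert (E2 : fsum (fun mu => cartan n L mu sg c x (s x) * Dsec n L s b mu x)
                 = fsum (fun mu => cartan n L mu sg c x (s x) * pd b (fun x' => s x' mu) x)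
                   + fsum (fun nu => nlc n L nu b x (s x) * cartan n L nu sg c x (s x)))
      by (rewrite <- fsum_plus; apply fsum_ext; intros; unfold Dsec; ring).
    rewrite E1, E2. unfold Phi. ring.
  - now apply TM0_chart_open.
  - exact (smooth_on_iter_pd _ F [Fin.R n sg; Fin.R n c] HL).
  - now apply TM0_chart_join, Hs0.
  - intros mu. exact (proj1 (Hs mu [] x Ux) b).
Qed.

End PullbackMetric.

(** * The difference of the two Koszul formulas *)

Lemma koszul_difference {m} (gi : Mat m) (C : Fin.t m -> Fin.t m -> Fin.t m -> R)
  (D : Fin.t m -> Fin.t m -> R) a b c :
  (forall mu sg k, C mu sg k = C sg mu k) ->
  / 2 * fsum (fun sg => gi a sg *
      (2 * fsum (fun mu => C mu sg c * D b mu) + 2 * fsum (fun mu => C mu sg b * D c mu)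
       - 2 * fsum (fun mu => C mu b c * D sg mu)))
  = fsum (fun mu => fsum (fun d => gi a d * C d mu c) * D b mu
                    + fsum (fun d => gi a d * C d mu b) * D c mu)
    - fsum (fun mu => fsum (fun d => C mu b c * gi a d * D d mu)).
Proof.
  intros HC.
  transitivity (fsum (fun sg => fsum (fun mu =>
    gi a sg * (C mu sg c * D b mu + C mu sg b * D c mu - C mu b c * D sg mu)))).
  - rewrite <- fsum_mult_l. apply fsum_ext; intros sg.
    rewrite <- !fsum_mult_l, <- fsum_plus, <- fsum_minus, <- !fsum_mult_l.
    apply fsum_ext; intros mu. field.
  - rewrite fsum_swap, <- fsum_minus. apply fsum_ext; intros mu.
    rewrite <- !fsum_mult_r, <- fsum_plus, <- fsum_minus. apply fsum_ext; intros d.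
    rewrite (HC d mu c), (HC d mu b). ring.
Qed.

(** [Hhom] and [Hnd] are not used: the identity only needs the chain rule and
    the symmetry of third derivatives, and both sides involve the same
    (possibly junk) inverse [ginv]. *)
Theorem mainTheorem1
  (n : nat) (U : V n -> Prop) (L : V n -> V n -> R) (s : V n -> V n)
  (HU : is_open U)
  (HLsmooth : smooth_on (fun z : V (n + n) => U (xpart z) /\ ypart z <> vzero)
                        (fun z => L (xpart z) (ypart z)))
  (Hhom : forall x y t, U x -> y <> vzero -> 0 < t -> L x (vscale t y) = t ^ 2 * L x y)
  (Hnd : forall x y, U x -> y <> vzero -> nondegenerate (gmet n L x y))
  (Hs : forall mu, smooth_on U (fun x => s x mu))
  (Hs0 : forall x, U x -> s x <> vzero) :
  forall x, U x -> forall a b c : Fin.t n,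
    levi_civita (pullback_metric L s) a b c x - chern_rund n L a b c x (s x)
    = fsum (fun mu => cartan_up n L a mu c x (s x) * Dsec n L s b mu x
                      + cartan_up n L a mu b x (s x) * Dsec n L s c mu x)
      - fsum (fun mu => fsum (fun d =>
          cartan n L mu b c x (s x) * ginv n L x (s x) a d * Dsec n L s d mu x)).
Proof.
  intros x Ux a b c.
  unfold cartan_up.
  rewrite <- (koszul_difference (ginv n L x (s x)) (fun mu sg k => cartan n L mu sg k x (s x))
                                (fun b mu => Dsec n L s b mu x))
    by (intros; now apply (cartan_sym n U), Hs0).
  unfold levi_civita, chern_rund.
  rewrite <- Rmult_minus_distr_l, <- fsum_minus. f_equal. apply fsum_ext; intros sg.
  rewrite <- !(pd_pullback_metric_sub_deltax n U L s HU HLsmooth Hs Hs0) by exact Ux.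
  change (minv (pullback_metric L s x)) with (ginv n L x (s x)). ring.
Qed.
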